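(* Let $\lambda_1,\lambda_2,\sigma_1,\sigma_2\in\mathbb{C}^*$ and $\eta_1,\eta_2\in\mathbb{C}$ with $\lambda_1\neq\lambda_2$. Then the $\mathcal{G}$-submodule of $\Omega(\lambda_1,\eta_1,\sigma_1,0)\otimes\Omega(\lambda_2,\eta_2,0,\sigma_2)$ generated by $1\otimes 1$ is the whole module $\Omega(\lambda_1,\eta_1,\sigma_1,0)\otimes\Omega(\lambda_2,\eta_2,0,\sigma_2)$.
   Context: The planar Galilean conformal algebra $\mathcal{G}$ is the complex Lie algebra with basis $\{L_m,H_m,I_m,J_m\mid m\in\mathbb{Z}\}$ and brackets $[L_m,L_n]=(n-m)L_{m+n}$, $[L_m,H_n]=nH_{m+n}$, $[L_m,I_n]=(n-m)I_{m+n}$, $[L_m,J_n]=(n-m)J_{m+n}$, $[H_m,I_n]=I_{m+n}$, $[H_m,J_n]=-J_{m+n}$, and $[H_m,H_n]=[I_m,I_n]=[J_m,J_n]=[I_m,J_n]=0$ for all $m,n\in\mathbb{Z}$. For $\lambda,\sigma\in\mathbb{C}^*$, $\eta\in\mathbb{C}$, the module $\Omega(\lambda,\eta,\sigma,0)$ is $\mathbb{C}[X,Y]$ with $L_m f(X,Y)=\lambda^m(Y-mX+m\eta)f(X,Y-m)$, $H_m f(X,Y)=\lambda^m X f(X,Y-m)$, $I_m f(X,Y)=\lambda^m\sigma f(X-1,Y-m)$, $J_m f(X,Y)=0$. The module $\Omega(\lambda,\eta,0,\sigma)$ is $\mathbb{C}[S,T]$ with $L_m f(S,T)=\lambda^m(T+mS+m\eta)f(S,T-m)$,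 $H_m f(S,T)=\lambda^m S f(S,T-m)$, $I_m f(S,T)=0$, $J_m f(S,T)=\lambda^m\sigma f(S+1,T-m)$. The tensor product of $\mathcal{G}$-modules has action $x(v\otimes w)=xv\otimes w+v\otimes xw$. *)

From HB Require Import structures.
From mathcomp Require Import all_boot all_order all_algebra.
From mathcomp Require Import reals complex.
From mathcomp Require Import mpoly.
Set Implicit Arguments. Unset Strict Implicit. Unset Printing Implicit Defensive.
Import Order.TTheory GRing.Theory Num.Theory.
Local Open Scope ring_scope.

Notation Cx R := (complex R).

(* The tensor product Omega(l1,e1,s1,0) (x) Omega(l2,e2,0,s2) = C[X,Y] (x) C[S,T]
   is identified with C[X,Y,S,T] via f(X,Y) (x) g(S,T) |-> f(X,Y) g(S,T). *)
Notation TP R := {mpoly (Cx R)[4]}.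

Definition v0 : 'I_4 := @Ordinal 4 0 isT.
Definition v1 : 'I_4 := @Ordinal 4 1 isT.
Definition v2 : 'I_4 := @Ordinal 4 2 isT.
Definition v3 : 'I_4 := @Ordinal 4 3 isT.

Section Module.
Variable R : realType.
Local Notation C := (Cx R).

Definition VX : TP R := 'X_v0.
Definition VY : TP R := 'X_v1.
Definition VS : TP R := 'X_v2.
Definition VT : TP R := 'X_v3.

Definition shift (a b c d : C) (P : TP R) : TP R :=
  comp_mpoly [tuple VX + a%:MP; VY + b%:MP; VS + c%:MP; VT + d%:MP] P.

Inductive gca_basis : Type :=
| gL of int | gH of int | gI of int | gJ of int.

(* action on the tensor product x(v (x) w) = xv (x) w + v (x) xw, extended linearly *)
Definition tensor_act (l1 e1 s1 l2 e2 s2 : C) (x : gca_basis) (P : TP R) : TP R :=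
  match x with
  | gL m => (l1 ^ m) *: ((VY - (m%:~R : C) *: VX + (m%:~R * e1)%:MP) * shift 0 (- m%:~R) 0 0 P)
          + (l2 ^ m) *: ((VT + (m%:~R : C) *: VS + (m%:~R * e2)%:MP) * shift 0 0 0 (- m%:~R) P)
  | gH m => (l1 ^ m) *: (VX * shift 0 (- m%:~R) 0 0 P)
          + (l2 ^ m) *: (VS * shift 0 0 0 (- m%:~R) P)
  | gI m => (l1 ^ m * s1) *: shift (-1) (- m%:~R) 0 0 P
  | gJ m => (l2 ^ m * s2) *: shift 0 0 1 (- m%:~R) P
  end.

Definition is_submodule (act : gca_basis -> TP R -> TP R) (W : TP R -> Prop) : Prop :=
  [/\ W 0,
      (forall P Q, W P -> W Q -> W (P + Q)),
      (forall (c : C) P, W P -> W (c *: P)) &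
      (forall x P, W P -> W (act x P))].

Definition generated_submodule (act : gca_basis -> TP R -> TP R) (v : TP R) (P : TP R) : Prop :=
  forall W, is_submodule act W -> W v -> W P.

End Module.

From HB Require Import structures.
From mathcomp Require Import all_boot all_order all_algebra.
From mathcomp Require Import reals complex.
From mathcomp Require Import mpoly.
From mathcomp Require Import ring.
Import Order.TTheory GRing.Theory Num.Theory.
Local Open Scope ring_scope.

(* Filter C[X,Y,S,T] by total degree and induct on the degree, starting from 1.
   Let W be a submodule containing every polynomial of degree <= d, and let p have
   degree <= d.  Writing tY and tT for the translations Y |-> Y - 1 and T |-> T - 1,
   H_1 p - l2 H_0 p = (l1 - l2) X p + l1 X (tY p - p) + l2 S (tT p - p), and the last
   two terms have degree <= d because a translation only changes lower order terms. *)

Section DegreeFiltration.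
Context {n : nat} {K : comNzRingType}.
Implicit Types (p q : {mpoly K[n]}) (t : n.-tuple {mpoly K[n]}).

Inductive deg_le : nat -> {mpoly K[n]} -> Prop :=
| deg_leC d c : deg_le d c%:MP
| deg_leS d p : deg_le d p -> deg_le d.+1 p
| deg_leD d p q : deg_le d p -> deg_le d q -> deg_le d (p + q)
| deg_leX d i p : deg_le d p -> deg_le d.+1 ('X_i * p).

Lemma deg_le0 d : deg_le d 0.
Proof. by rewrite -mpolyC0; apply: deg_leC. Qed.

Lemma deg_leZ d c p : deg_le d p -> deg_le d (c *: p).
Proof.
elim=> {d p} [d c'|d p _ IH|d p q _ IHp _ IHq|d i p _ IH].
- by rewrite -mul_mpolyC -mpolyCM; apply: deg_leC.
- exact: deg_leS.
- by rewrite scalerDr; apply: deg_leD.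
- by rewrite scalerAr; apply: deg_leX.
Qed.

Lemma deg_leW d d' p : deg_le d p -> (d <= d')%N -> deg_le d' p.
Proof.
move=> p_d; elim: d' => [|d' IH]; first by rewrite leqn0 => /eqP <-.
by rewrite leq_eqVlt => /predU1P [<- //| /IH /deg_leS].
Qed.

Lemma deg_le_mpolyX m : exists d, deg_le d 'X_[m].
Proof.
rewrite mpolyXE_id; elim/big_rec: _ => [|i x _ [d x_d]].
  by exists 0%N; rewrite -mpolyC1; apply: deg_leC.
elim: (m i) => [|k [d' Xx_d']]; first by exists d; rewrite expr0 mul1r.
by exists d'.+1; rewrite exprS -mulrA; apply: deg_leX.
Qed.

Lemma deg_le_exists p : exists d, deg_le d p.
Proof.
elim/mpolyind: p => [|c m p _ _ [d p_d]]; first by exists 0%N; apply: deg_le0.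
have [d' m_d'] := deg_le_mpolyX m.
exists (maxn d d'); apply: deg_leD.
  by apply: deg_leZ; apply: deg_leW m_d' (leq_maxr _ _).
exact: deg_leW p_d (leq_maxl _ _).
Qed.

Lemma mpoly_deg_ind (P : {mpoly K[n]} -> Prop) :
    (forall c, P c%:MP) ->
    (forall p q, P p -> P q -> P (p + q)) ->
    (forall d i p, (forall q, deg_le d q -> P q) -> deg_le d p -> P ('X_i * p)) ->
  forall p, P p.
Proof.
move=> PC PD PX p; have [D p_D] := deg_le_exists p.
suff PD_all : forall d q, deg_le d q -> (d <= D)%N -> P q by exact: PD_all p_D _.
elim/ltn_ind: D {p p_D} => D IH d q.
elim=> {d q} [d c|d q _ IHq|d q q' _ IHq _ IHq'|d i q q_d _] d_le.
- exact: PC.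
- exact/IHq/ltnW.
- by apply: PD; [apply: IHq | apply: IHq'].
- by apply: PX q_d => q' q'_d; apply: IH d_le _ _ q'_d _.
Qed.

Definition translation t := forall i, exists c, tnth t i = 'X_i + c%:MP.

Lemma deg_le_comp_translation t d p : translation t -> deg_le d p -> deg_le d (p \mPo t).
Proof.
move=> tr; elim=> {d p} [d c|d p _ IH|d p q _ IHp _ IHq|d i p _ IH].
- by rewrite comp_mpolyC; apply: deg_leC.
- exact: deg_leS.
- by rewrite comp_mpolyD; apply: deg_leD.
- rewrite rmorphM /= comp_mpolyXU -tnth_nth; have [c ->] := tr i.
  rewrite mulrDl mul_mpolyC; apply: deg_leD; first exact: deg_leX.
  exact/deg_leS/deg_leZ.
Qed.

Lemma deg_le_mulX_comp_translation_sub t d p j :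
  translation t -> deg_le d p -> deg_le d ('X_j * (p \mPo t - p)).
Proof.
move=> tr; elim=> {d p} [d c|d p _ IH|d p q _ IHp _ IHq|d i p p_d IH].
- by rewrite comp_mpolyC subrr mulr0; apply: deg_le0.
- exact: deg_leS.
- by rewrite comp_mpolyD opprD addrACA mulrDr; apply: deg_leD.
- rewrite rmorphM /= comp_mpolyXU -tnth_nth; have [c ->] := tr i.
  have -> : 'X_j * (('X_i + c%:MP) * (p \mPo t) - 'X_i * p)
     = 'X_i * ('X_j * (p \mPo t - p)) + c *: ('X_j * (p \mPo t)).
    by rewrite -mul_mpolyC; ring.
  apply: deg_leD; first exact: deg_leX.
  exact/deg_leZ/deg_leX/deg_le_comp_translation.
Qed.

End DegreeFiltration.

Section GalileanAction.
Context {R : realType}.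
Local Notation C := (Cx R).
Local Notation X := (VX R).
Local Notation Y := (VY R).
Local Notation S := (VS R).
Local Notation T := (VT R).

Lemma shift_translation (a b c d : C) :
  translation [tuple X + a%:MP; Y + b%:MP; S + c%:MP; T + d%:MP].
Proof.
case=> [[|[|[|[|k]]]] lt_k4] //; rewrite /tnth /=;
  [exists a | exists b | exists c | exists d]; congr (_ + _); congr 'X_(_); exact: val_inj.
Qed.

Lemma deg_le_shift (a b c d : C) k p : deg_le k p -> deg_le k (shift a b c d p).
Proof. exact/deg_le_comp_translation/shift_translation. Qed.

Lemma deg_le_mulX_shift_sub (a b c d : C) k p j :
  deg_le k p -> deg_le k ('X_j * (shift a b c d p - p)).
Proof. exact/deg_le_mulX_comp_translation_sub/shift_translation. Qed.

Lemma shift0 (p : TP R) : shift 0 0 0 0 p = p.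
Proof.
rewrite /shift.
have -> : [tuple X + (0 : C)%:MP; Y + (0 : C)%:MP; S + (0 : C)%:MP; T + (0 : C)%:MP]
          = [tuple 'X_i | i < 4].
  apply: eq_from_tnth => i; rewrite tnth_map tnth_ord_tuple mpolyC0 !addr0.
  by case: i => [[|[|[|[|k]]]] lt_k4] //; rewrite /tnth /=; congr 'X_(_); apply: val_inj.
exact: comp_mpoly_id.
Qed.

Lemma ord4_cases (i : 'I_4) : [\/ i = v0, i = v1, i = v2 | i = v3].
Proof.
case: i => [[|[|[|[|k]]]] lt_k4] //;
  [constructor 1 | constructor 2 | constructor 3 | constructor 4]; exact: val_inj.
Qed.

Context {l1 e1 s1 l2 e2 s2 : C}.
Local Notation act := (tensor_act l1 e1 s1 l2 e2 s2).
Local Notation shiftY p := (shift 0 (-1) 0 0 p).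
Local Notation shiftT p := (shift 0 0 0 (-1) p).

Lemma tensor_actH0 p : act (gH 0) p = X * p + S * p.
Proof. by rewrite /tensor_act !expr0z mulr0z oppr0 shift0 !scale1r. Qed.

Lemma tensor_actL0 p : act (gL 0) p = Y * p + T * p.
Proof.
rewrite /tensor_act !expr0z mulr0z oppr0 shift0 !scale1r !scale0r.
by rewrite !mul0r !mpolyC0 !subr0 !addr0.
Qed.

Lemma scale_mulX_tensor_actH p :
  (l1 - l2) *: (X * p) = act (gH 1) p - l2 *: act (gH 0) p
    - l1 *: (X * (shiftY p - p)) - l2 *: (S * (shiftT p - p)).
Proof.
rewrite tensor_actH0 /tensor_act !expr1z mulr1z -!mul_mpolyC mpolyCB.
move: (shiftY p) (shiftT p) (l1%:MP_[4]) (l2%:MP_[4]) X S => a b c d x y.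
ring.
Qed.

Lemma scale_mulY_tensor_actL p :
  (l1 - l2) *: (Y * p) = act (gL 1) p - l2 *: act (gL 0) p
    - l1 *: (Y * (shiftY p - p)) - l2 *: (T * (shiftT p - p))
    + l1 *: (X * shiftY p) - l2 *: (S * shiftT p)
    - (l1 * e1) *: shiftY p - (l2 * e2) *: shiftT p.
Proof.
rewrite tensor_actL0 /tensor_act !expr1z mulr1z !scale1r -!mul_mpolyC !mpolyCM mpolyCB.
move: (shiftY p) (shiftT p) (l1%:MP_[4]) (l2%:MP_[4]) (e1%:MP_[4]) (e2%:MP_[4]) X Y S T.
move=> a b c d f g x y z t; ring.
Qed.

Context {W : TP R -> Prop}.
Hypothesis W_submod : is_submodule act W.

Lemma submod_memD {p q} : W p -> W q -> W (p + q).
Proof. by case: W_submod => _ memD _ _; apply: memD. Qed.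

Lemma submod_memZ (c : C) {p} : W p -> W (c *: p).
Proof. by case: W_submod => _ _ memZ _; apply: memZ. Qed.

Lemma submod_mem_act x {p} : W p -> W (act x p).
Proof. by case: W_submod => _ _ _ mem_act; apply: mem_act. Qed.

Lemma submod_memB {p q} : W p -> W q -> W (p - q).
Proof. by move=> Wp Wq; rewrite -scaleN1r; apply/submod_memD/submod_memZ. Qed.

Lemma submod_memZ_nz (c : C) {p} : c != 0 -> W (c *: p) -> W p.
Proof. by move=> c_neq0 /(submod_memZ c^-1); rewrite scalerA mulVf ?scale1r. Qed.

Hypothesis l1_neq_l2 : l1 != l2.

Lemma l1_sub_l2_neq0 : l1 - l2 != 0.
Proof. by rewrite subr_eq0. Qed.

Context {d : nat}.
Hypothesis W_deg_le : forall q, deg_le d q -> W q.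

Lemma submod_mem_mulX {p} : deg_le d p -> W (X * p).
Proof.
move=> p_d; apply: (submod_memZ_nz _ l1_sub_l2_neq0); rewrite scale_mulX_tensor_actH.
have W_diff j a b : W ('X_j * (shift 0 a 0 b p - p)).
  exact/W_deg_le/deg_le_mulX_shift_sub.
have Wp : W p := W_deg_le _ p_d.
apply: submod_memB (submod_memZ _ (W_diff _ _ _)).
apply: submod_memB (submod_memZ _ (W_diff _ _ _)).
exact: submod_memB (submod_mem_act _ Wp) (submod_memZ _ (submod_mem_act _ Wp)).
Qed.

Lemma submod_mem_mulS {p} : deg_le d p -> W (S * p).
Proof.
move=> p_d; have -> : S * p = act (gH 0) p - X * p by rewrite tensor_actH0 addrAC subrr add0r.
exact: submod_memB (submod_mem_act _ (W_deg_le _ p_d)) (submod_mem_mulX p_d).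
Qed.

Lemma submod_mem_mulY {p} : deg_le d p -> W (Y * p).
Proof.
move=> p_d; apply: (submod_memZ_nz _ l1_sub_l2_neq0); rewrite scale_mulY_tensor_actL.
have W_diff j a b : W ('X_j * (shift 0 a 0 b p - p)).
  exact/W_deg_le/deg_le_mulX_shift_sub.
have Wp : W p := W_deg_le _ p_d.
have shift_d a b : deg_le d (shift 0 a 0 b p) by exact: deg_le_shift.
have W_shift a b : W (shift 0 a 0 b p) := W_deg_le _ (shift_d a b).
have WX_shift a b : W (X * shift 0 a 0 b p) := submod_mem_mulX (shift_d a b).
have WS_shift a b : W (S * shift 0 a 0 b p) := submod_mem_mulS (shift_d a b).
apply: submod_memB (submod_memZ _ (W_shift _ _)).
apply: submod_memB (submod_memZ _ (W_shift _ _)).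
apply: submod_memB (submod_memZ _ (WS_shift _ _)).
apply: submod_memD (submod_memZ _ (WX_shift _ _)).
apply: submod_memB (submod_memZ _ (W_diff _ _ _)).
apply: submod_memB (submod_memZ _ (W_diff _ _ _)).
exact: submod_memB (submod_mem_act _ Wp) (submod_memZ _ (submod_mem_act _ Wp)).
Qed.

Lemma submod_mem_mulT {p} : deg_le d p -> W (T * p).
Proof.
move=> p_d; have -> : T * p = act (gL 0) p - Y * p by rewrite tensor_actL0 addrAC subrr add0r.
exact: submod_memB (submod_mem_act _ (W_deg_le _ p_d)) (submod_mem_mulY p_d).
Qed.

Lemma submod_mem_mul_var i p : deg_le d p -> W ('X_i * p).
Proof.
case: (ord4_cases i) => ->.
- exact: submod_mem_mulX.
- exact: submod_mem_mulY.
- exact: submod_mem_mulS.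
- exact: submod_mem_mulT.
Qed.

End GalileanAction.

Theorem proposition3p2 (R : realType) (l1 l2 s1 s2 e1 e2 : complex R) :
  l1 != 0 -> l2 != 0 -> s1 != 0 -> s2 != 0 -> l1 != l2 ->
  forall P : TP R, generated_submodule (tensor_act l1 e1 s1 l2 e2 s2) 1 P.
Proof.
move=> _ _ _ _ l1_neq_l2 P W W_submod W1.
move: P; apply: mpoly_deg_ind => [c | p q | d i p W_d p_d].
- by rewrite -[c%:MP]mulr1 mul_mpolyC; apply: (submod_memZ W_submod).
- exact: (submod_memD W_submod).
- exact: (submod_mem_mul_var W_submod l1_neq_l2 W_d).
Qed.
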